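(* For every $\mathsf V$-category $X=(X,a)$, the set $\tilde X$ of tight $\mathsf V$-functors $X^{\mathrm{op}}\to\mathsf V$ coincides with the L-closure of $y(X)$ in $\hat X$. Hence the Yoneda functor $y:X\to\tilde X$ is fully faithful and L-dense, and $\tilde X$ is L-complete.
   Context: Let $\mathsf V=(\mathsf V,\otimes,k)$ be a commutative unital quantale (complete lattice with commutative associative $\otimes$, neutral element $k$, $u\otimes(-)$ preserving suprema), with internal hom $z\le u\multimap v\iff z\otimes u\le v$. A $\mathsf V$-category $(X,a)$ is a set with $a:X\times X\to\mathsf V$, $k\le a(x,x)$, $a(x,y)\otimes a(y,z)\le a(x,z)$; a $\mathsf V$-functor $f:(X,a)\to(Y,b)$ satisfies $a(x,y)\le b(f(x),f(y))$; subsets carry the restricted structure. For $\mathsf V$-functors $f,g:Z\to(Y,b)$, $f\cong g$ means $k\le b(f(z),g(z))$ and $k\le b(g(z),f(z))$ for all $z$; for points, $x\cong y$ means $k\le a(x,y)$ and $k\le a(y,x)$. The L-closure of $M\subseteq X$ is $\overline M=\{x\in X\mid$ for all $\mathsf V$-functors $f,g:X\to Y$ with $f|_M=g|_M$ one has $f(x)\cong g(x)\}$. A $\mathsf V$-relation from $X$ to $Y$ is a map $X\times Y\to\mathsf V$, composed by $(s\cdot r)(x,z)=\bigvee_y r(x,y)\otimes s(y,z)$. A $\mathsf V$-module $\varphi:(X,a)\to(Y,b)$ is a $\mathsf V$-relation with $\varphi\cdot a\le\varphi$, $b\cdot\varphi\le\varphi$; for a $\mathsf V$-functor $f:Z\to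 X$, $f_*(z,x)=a(f(z),x)$, $f^*(x,z)=a(x,f(z))$; $\varphi\dashv\psi$ for $\varphi:Z\to X$, $\psi:X\to Z$ means $c\le\psi\cdot\varphi$ and $\varphi\cdot\psi\le a$. $X$ is L-complete if every such adjunction is $f_*\dashv f^*$ for some $\mathsf V$-functor $f:Z\to X$. $f:(X,a)\to(Y,b)$ is fully faithful if $a(x,x')=b(f(x),f(x'))$ and L-dense if $b(y,y')=\bigvee_x b(y,f(x))\otimes b(f(x),y')$. $X^{\mathrm{op}}=(X,a^\circ)$, $a^\circ(x,y)=a(y,x)$; $\mathsf V$ has structure $\multimap$. $\hat X$ is the set of $\mathsf V$-functors $X^{\mathrm{op}}\to\mathsf V$ with $\hat a(f,f')=\bigwedge_x f(x)\multimap f'(x)$, and $y:X\to\hat X$, $y(x)=a(-,x)$. With $E=(\{\star\},k)$, each $\psi\in\hat X$ is a module $X\to E$ via $\psi(x,\star)=\psi(x)$, and $\psi$ is tight if this module has a left adjoint; $\tilde X\subseteq\hat X$ is the set of tight elements with induced structure. *)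

Set Implicit Arguments.
Unset Strict Implicit.

Record quantale := Quantale {
  qcar :> Type;
  qle : qcar -> qcar -> Prop;
  qle_refl : forall x, qle x x;
  qle_trans : forall x y z, qle x y -> qle y z -> qle x z;
  qle_antisym : forall x y, qle x y -> qle y x -> x = y;
  qsup : (qcar -> Prop) -> qcar;
  qsup_ub : forall (S : qcar -> Prop) x, S x -> qle x (qsup S);
  qsup_least : forall (S : qcar -> Prop) z, (forall x, S x -> qle x z) -> qle (qsup S) z;
  qten : qcar -> qcar -> qcar;
  qk : qcar;
  qtenA : forall u v w, qten u (qten v w) = qten (qten u v) w;
  qtenC : forall u v, qten u v = qten v u;
  qten1 : forall u, qten qk u = u;
  qten_sup : forall u (S : qcar -> Prop),
    qten u (qsup S) = qsup (fun w => exists v, S v /\ w = qten u v)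
}.

Arguments qle {q}.
Arguments qsup {q}.
Arguments qten {q}.
Arguments qk {q}.

Section Defs.
Variable V : quantale.

Definition isup (I : Type) (F : I -> V) : V := qsup (fun w => exists i, w = F i).
Definition qinf (S : V -> Prop) : V := qsup (fun z => forall x, S x -> qle z x).
Definition iinf (I : Type) (F : I -> V) : V := qinf (fun w => exists i, w = F i).

(** internal hom: [z <= u -o v  <->  z (x) u <= v] *)
Definition qhom (u v : V) : V := qsup (fun z => qle (qten z u) v).

Definition Vcat (X : Type) (a : X -> X -> V) : Prop :=
  (forall x, qle qk (a x x)) /\
  (forall x y z, qle (qten (a x y) (a y z)) (a x z)).

Definition Vfunctor (X Y : Type) (a : X -> X -> V) (b : Y -> Y -> V) (f : X -> Y) : Prop :=
  forall x x', qle (a x x') (b (f x) (f x')).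

Definition Lclosure (X : Type) (a : X -> X -> V) (M : X -> Prop) (x : X) : Prop :=
  forall (Y : Type) (b : Y -> Y -> V), Vcat b ->
  forall f g : X -> Y, Vfunctor a b f -> Vfunctor a b g ->
  (forall m, M m -> f m = g m) ->
  qle qk (b (f x) (g x)) /\ qle qk (b (g x) (f x)).

(** V-relations, composition [(s . r)(x,z) = sup_y r(x,y) (x) s(y,z)]:
    [rcomp r s] is  s . r *)
Definition rcomp (X Y Z : Type) (r : X -> Y -> V) (s : Y -> Z -> V) : X -> Z -> V :=
  fun x z => isup (fun y => qten (r x y) (s y z)).

Definition Vmodule (X Y : Type) (a : X -> X -> V) (b : Y -> Y -> V) (phi : X -> Y -> V) : Prop :=
  (forall x y, qle (rcomp a phi x y) (phi x y)) /\
  (forall x y, qle (rcomp phi b x y) (phi x y)).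

Definition Vadj (Z X : Type) (c : Z -> Z -> V) (a : X -> X -> V)
  (phi : Z -> X -> V) (psi : X -> Z -> V) : Prop :=
  (forall z z', qle (c z z') (rcomp phi psi z z')) /\
  (forall x x', qle (rcomp psi phi x x') (a x x')).

(** L-completeness: every adjunction of modules phi -| psi with phi : Z -+-> X
    is f_* -| f^* for some V-functor f : Z -> X. *)
Definition Lcomplete (X : Type) (a : X -> X -> V) : Prop :=
  forall (Z : Type) (c : Z -> Z -> V), Vcat c ->
  forall (phi : Z -> X -> V) (psi : X -> Z -> V),
  Vmodule c a phi -> Vmodule a c psi -> Vadj c a phi psi ->
  exists f : Z -> X, Vfunctor c a f /\
    (forall z x, phi z x = a (f z) x) /\ (forall x z, psi x z = a x (f z)).

Definition fully_faithful (X Y : Type) (a : X -> X -> V) (b : Y -> Y -> V) (f : X -> Y) : Prop :=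
  forall x x', a x x' = b (f x) (f x').

Definition Ldense (X Y : Type) (b : Y -> Y -> V) (f : X -> Y) : Prop :=
  forall y y', b y y' = isup (fun x => qten (b y (f x)) (b (f x) y')).

Definition opp (X : Type) (a : X -> X -> V) : X -> X -> V := fun x y => a y x.

Definition Xhat (X : Type) (a : X -> X -> V) : Type :=
  { f : X -> V | Vfunctor (opp a) qhom f }.

Definition hat (X : Type) (a : X -> X -> V) (p q : Xhat a) : V :=
  iinf (fun x => qhom (proj1_sig p x) (proj1_sig q x)).

Lemma yoneda_functor (X : Type) (a : X -> X -> V) (HX : Vcat a) (x : X) :
  Vfunctor (opp a) qhom (fun y => a y x).
Proof.
  intros y y'. unfold opp, qhom. apply qsup_ub. apply (proj2 HX).
Qed.

Definition yoneda (X : Type) (a : X -> X -> V) (HX : Vcat a) (x : X) : Xhat a :=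
  exist _ (fun y => a y x) (yoneda_functor HX x).

Definition Ecat : unit -> unit -> V := fun _ _ => qk.

(** tight presheaves: the module psi : X -+-> E, psi(x,star) = psi(x), has a left adjoint *)
Definition tight (X : Type) (a : X -> X -> V) (p : Xhat a) : Prop :=
  exists phi : unit -> X -> V,
    Vmodule Ecat a phi /\ Vadj Ecat a phi (fun x _ => proj1_sig p x).

Definition Xtilde (X : Type) (a : X -> X -> V) : Type := { p : Xhat a | tight p }.

Definition tildehom (X : Type) (a : X -> X -> V) (p q : Xtilde a) : V :=
  hat (proj1_sig p) (proj1_sig q).

End Defs.


Set Implicit Arguments.
Unset Strict Implicit.

(* A presheaf p is tight exactly when the unit is covered by p itself,
   k <= sup_x hat(p, y x) (x) p(x); the left adjoint is then x |-> hat(p, y x).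
   The cover makes hat(p, -) agree with the weighted colimit
   q |-> sup_x hat(p, y x) (x) q(x). Both maps are V-functors into (V, -o)
   and coincide on representables, so tightness implies membership in the
   L-closure; conversely, L-closure forces the two maps to agree at p, which
   gives back the cover. For L-completeness, an adjunction phi -| psi into the
   tight presheaves is represented by the presheaf x |-> psi(y x, z), and the
   unit of the adjunction provides its cover. *)

Section QuantaleFacts.
Variable V : quantale.
Local Notation "x <<= y" := (@qle V x y) (at level 70).
Local Notation "x ** y" := (@qten V x y) (at level 40, left associativity).

Lemma isup_ub I (F : I -> V) i : F i <<= isup F.
Proof. apply qsup_ub. exists i; reflexivity. Qed.

Lemma isup_least I (F : I -> V) z : (forall i, F i <<= z) -> isup F <<= z.
Proof. intro H. apply qsup_least. intros x [i ->]. apply H. Qed.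

Lemma iinf_lb I (F : I -> V) i : iinf F <<= F i.
Proof. apply qsup_least. intros z Hz. apply Hz. exists i; reflexivity. Qed.

Lemma iinf_glb I (F : I -> V) z : (forall i, z <<= F i) -> z <<= iinf F.
Proof. intro H. apply qsup_ub. intros x [i ->]. apply H. Qed.

Lemma qten1r (u : V) : u ** qk = u.
Proof. rewrite qtenC; apply qten1. Qed.

Lemma qten_monor (u x y : V) : x <<= y -> u ** x <<= u ** y.
Proof.
  intro Hxy.
  (* [y] is the join of [x] and [y], and [qten u] preserves joins. *)
  assert (Ey : y = qsup (fun w => w = x \/ w = y)).
  { apply qle_antisym.
    - apply qsup_ub; auto.
    - apply qsup_least. intros w [-> | ->]; auto using qle_refl. }
  rewrite Ey, qten_sup. apply qsup_ub. exists x; auto.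
Qed.

Lemma qten_mono (x x' y y' : V) : x <<= x' -> y <<= y' -> x ** y <<= x' ** y'.
Proof.
  intros Hx Hy. apply qle_trans with (x ** y').
  - apply qten_monor, Hy.
  - rewrite (qtenC x), (qtenC x'). apply qten_monor, Hx.
Qed.

Lemma qtenACA (p q r s : V) : (p ** q) ** (r ** s) = (p ** r) ** (q ** s).
Proof. rewrite <- !qtenA. f_equal. rewrite !qtenA. f_equal. apply qtenC. Qed.

Lemma qhomP (z u v : V) : z <<= qhom u v <-> z ** u <<= v.
Proof.
  split; intro H.
  - apply qle_trans with (qhom u v ** u).
    + apply qten_mono; auto using qle_refl.
    + unfold qhom. rewrite qtenC, qten_sup. apply qsup_least.
      intros w [t [Ht ->]]. rewrite qtenC; exact Ht.
  - apply qsup_ub, H.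
Qed.

Lemma qten_isup_le (u : V) I (F : I -> V) t :
  (forall i, u ** F i <<= t) -> u ** isup F <<= t.
Proof.
  intro H. unfold isup. rewrite qten_sup. apply qsup_least.
  intros w [v [[i ->] ->]]. apply H.
Qed.

Lemma qten_cover_le I (F : I -> V) z t :
  qk <<= isup F -> (forall i, z ** F i <<= t) -> z <<= t.
Proof.
  intros Hk H. rewrite <- (qten1r z).
  apply qle_trans with (z ** isup F).
  - apply qten_monor, Hk.
  - apply qten_isup_le, H.
Qed.

Lemma rcomp_ub (X Y Z : Type) (r : X -> Y -> V) (s : Y -> Z -> V) x y z :
  r x y ** s y z <<= rcomp r s x z.
Proof. exact (isup_ub (fun y => r x y ** s y z) y). Qed.

Lemma Vcat_qhom : Vcat (@qhom V).
Proof.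
  split.
  - intro u. apply qhomP. rewrite qten1. apply qle_refl.
  - intros u v w. apply qhomP.
    rewrite <- qtenA, (qtenC (qhom v w)), qtenA.
    apply qle_trans with (v ** qhom v w).
    + apply qten_mono; [apply qhomP, qle_refl | apply qle_refl].
    + rewrite qtenC; apply qhomP, qle_refl.
Qed.

End QuantaleFacts.

Section Presheaves.
Variable V : quantale.
Local Notation "x <<= y" := (@qle V x y) (at level 70).
Local Notation "x ** y" := (@qten V x y) (at level 40, left associativity).

Variable X : Type.
Variable a : X -> X -> V.
Hypothesis HX : Vcat a.
Local Notation pv := (@proj1_sig _ _).
Local Notation yo := (yoneda HX).

Lemma presheaf_act (p : Xhat a) x x' : a x' x ** pv p x <<= pv p x'.
Proof. apply qhomP, (proj2_sig p). Qed.

Lemma hat_eval (p q : Xhat a) x : pv p x ** hat p q <<= pv q x.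
Proof.
  rewrite qtenC. apply qhomP.
  exact (iinf_lb (fun x => qhom (pv p x) (pv q x)) x).
Qed.

Lemma hat_intro (p q : Xhat a) z :
  (forall x, z ** pv p x <<= pv q x) -> z <<= hat p q.
Proof. intro H. apply iinf_glb. intro x. apply qhomP, H. Qed.

Lemma hat_comp (p q r : Xhat a) : hat p q ** hat q r <<= hat p r.
Proof.
  apply hat_intro. intro x.
  rewrite <- qtenA, (qtenC (hat q r)), qtenA.
  apply qle_trans with (pv q x ** hat q r).
  - apply qten_mono; [rewrite qtenC; apply hat_eval | apply qle_refl].
  - apply hat_eval.
Qed.

Lemma hat_refl (p : Xhat a) : qk <<= hat p p.
Proof. apply hat_intro. intro x. rewrite qten1. apply qle_refl. Qed.

Lemma hat_yoneda (q : Xhat a) x : hat (yo x) q = pv q x.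
Proof.
  apply qle_antisym.
  - rewrite <- (qten1 (hat (yo x) q)).
    apply qle_trans with (a x x ** hat (yo x) q).
    + apply qten_mono; [apply (proj1 HX) | apply qle_refl].
    + apply (hat_eval (yo x) q x).
  - apply hat_intro. intro y. simpl. rewrite qtenC. apply presheaf_act.
Qed.

Lemma hat_yoneda_yoneda x x' : hat (yo x) (yo x') = a x x'.
Proof. apply hat_yoneda. Qed.

Lemma tight_cover (p : Xhat a) :
  tight p -> qk <<= isup (fun x => hat p (yo x) ** pv p x).
Proof.
  intros [phi [_ [Hunit Hcounit]]].
  apply qle_trans with (1 := Hunit tt tt). apply isup_least. intro x.
  apply qle_trans with (hat p (yo x) ** pv p x).
  2: exact (isup_ub (fun x => hat p (yo x) ** pv p x) x).
  apply qten_mono; [|apply qle_refl].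
  apply hat_intro. intro y. simpl. rewrite qtenC.
  apply qle_trans with (2 := Hcounit y x).
  exact (rcomp_ub (fun x _ => pv p x) phi y tt x).
Qed.

Lemma cover_tight (p : Xhat a) :
  qk <<= isup (fun x => hat p (yo x) ** pv p x) -> tight p.
Proof.
  intro Hk. exists (fun _ x => hat p (yo x)). split; [split|split].
  - intros u x. apply isup_least. intro. unfold Ecat. rewrite qten1. apply qle_refl.
  - intros u x. apply isup_least. intro y.
    rewrite <- hat_yoneda_yoneda. apply hat_comp.
  - intros u u'. exact Hk.
  - intros x x'. apply isup_least. intro u. exact (hat_eval p (yo x') x).
Qed.

Lemma cover_hat_le (p q : Xhat a) (w : X -> V) :
  qk <<= isup (fun x => w x ** pv p x) ->
  hat p q <<= isup (fun x => w x ** pv q x).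
Proof.
  intro Hk. apply (qten_cover_le Hk). intro x.
  rewrite qtenA, (qtenC _ (w x)), <- qtenA.
  apply qle_trans with (w x ** pv q x).
  - apply qten_monor. rewrite qtenC. apply hat_eval.
  - exact (isup_ub (fun x => w x ** pv q x) x).
Qed.

Lemma tight_hat (p q : Xhat a) :
  tight p -> hat p q = isup (fun x => hat p (yo x) ** pv q x).
Proof.
  intro Hp. apply qle_antisym.
  - apply cover_hat_le, tight_cover, Hp.
  - apply isup_least. intro x. rewrite <- hat_yoneda. apply hat_comp.
Qed.

Local Notation representable := (fun q => exists x, q = yo x).

Lemma tight_Lclosure (p : Xhat a) : tight p -> Lclosure (@hat V X a) representable p.
Proof.
  intros Hp Y b [_ Hb] f g Hf Hg Hfg.
  assert (Efg : forall x, f (yo x) = g (yo x)) by (intro x; apply Hfg; eauto).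
  split; apply (qten_cover_le (tight_cover Hp)); intro x;
    rewrite qten1, <- (hat_yoneda p x);
    apply qle_trans with (2 := Hb _ (f (yo x)) _); apply qten_mono.
  - apply Hf.
  - rewrite Efg. apply Hg.
  - rewrite Efg. apply Hg.
  - apply Hf.
Qed.

Lemma Lclosure_tight (p : Xhat a) : Lclosure (@hat V X a) representable p -> tight p.
Proof.
  intro Hcl. apply cover_tight.
  set (colim := fun q : Xhat a => isup (fun x => hat p (yo x) ** pv q x)).
  destruct (Hcl V (@qhom V) (Vcat_qhom V) (hat p) colim) as [Hk _].
  - intros q q'. apply qhomP. rewrite qtenC. apply hat_comp.
  - intros q q'. apply qhomP. apply qten_isup_le. intro x.
    apply qle_trans with (hat p (yo x) ** pv q' x).
    + rewrite qtenA, (qtenC _ (hat p (yo x))), <- qtenA.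
      apply qten_monor. rewrite qtenC. apply hat_eval.
    + exact (isup_ub (fun x => hat p (yo x) ** pv q' x) x).
  - intros m [z ->]. apply qle_antisym.
    + rewrite <- (qten1r (hat p (yo z))).
      apply qle_trans with (hat p (yo z) ** a z z).
      * apply qten_monor, (proj1 HX).
      * exact (isup_ub (fun x => hat p (yo x) ** pv (yo z) x) z).
    + apply isup_least. intro x. rewrite <- hat_yoneda. apply hat_comp.
  - apply qhomP in Hk. rewrite qten1 in Hk.
    exact (qle_trans (hat_refl p) Hk).
Qed.

Lemma yoneda_tight x : tight (yo x).
Proof.
  apply Lclosure_tight. intros Y b [Hb _] f g _ _ Hfg.
  rewrite (Hfg (yo x)) by eauto. split; apply Hb.
Qed.

Definition ytilde (x : X) : Xtilde a := exist _ (yo x) (yoneda_tight x).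

Local Notation th := (@tildehom V X a).

Lemma tildehom_ytilde (q : Xtilde a) x : th (ytilde x) q = pv (proj1_sig q) x.
Proof. apply hat_yoneda. Qed.

Lemma tildehom_ytilde_ytilde x x' : th (ytilde x) (ytilde x') = a x x'.
Proof. apply hat_yoneda. Qed.

Lemma Ldense_ytilde : Ldense th ytilde.
Proof.
  intros [p Hp] q. apply qle_antisym.
  - unfold tildehom at 1. simpl. rewrite (tight_hat (pv q) Hp).
    apply isup_least. intro x. rewrite <- (hat_yoneda (pv q) x).
    exact (isup_ub (fun x => th (exist _ p Hp) (ytilde x) ** th (ytilde x) q) x).
  - apply isup_least. intro x. apply hat_comp.
Qed.

Section Completeness.
Variable Z : Type.
Variable c : Z -> Z -> V.
Hypothesis Hc : Vcat c.
Variable phi : Z -> Xtilde a -> V.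
Variable psi : Xtilde a -> Z -> V.
Hypothesis Hphi : Vmodule c th phi.
Hypothesis Hpsi : Vmodule th c psi.
Hypothesis Hadj : Vadj c th phi psi.

Lemma phi_actr z q q' : phi z q' ** th q' q <<= phi z q.
Proof. apply qle_trans with (2 := proj2 Hphi z q). apply rcomp_ub. Qed.

Lemma psi_actl z q q' : th q q' ** psi q' z <<= psi q z.
Proof. apply qle_trans with (2 := proj1 Hpsi q z). apply rcomp_ub. Qed.

Lemma psi_actr q z z' : psi q z' ** c z' z <<= psi q z.
Proof. apply qle_trans with (2 := proj2 Hpsi q z). apply rcomp_ub. Qed.

Lemma adj_counit q q' z : psi q z ** phi z q' <<= th q q'.
Proof. apply qle_trans with (2 := proj2 Hadj q q'). apply rcomp_ub. Qed.

(* The unit k <= sup_q phi(z, q) (x) psi(q, z) factors through representables,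
   because each tight q is itself covered by representables. *)
Lemma adj_unit_cover z :
  qk <<= isup (fun x => phi z (ytilde x) ** psi (ytilde x) z).
Proof.
  apply qle_trans with (1 := proj1 Hc z).
  apply qle_trans with (1 := proj1 Hadj z z). apply isup_least.
  intros [q Hq]. apply (qten_cover_le (tight_cover Hq)). intro x.
  rewrite qtenACA, (qtenC (psi _ z)), <- (hat_yoneda q x).
  apply qle_trans with (phi z (ytilde x) ** psi (ytilde x) z).
  - apply qten_mono; [apply (phi_actr z (ytilde x) (exist _ q Hq))
                     |apply (psi_actl z (ytilde x) (exist _ q Hq))].
  - exact (isup_ub (fun x => phi z (ytilde x) ** psi (ytilde x) z) x).
Qed.

Lemma psi_presheaf z : Vfunctor (opp a) (@qhom V) (fun x => psi (ytilde x) z).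
Proof.
  intros x x'. unfold opp. apply qhomP.
  rewrite <- tildehom_ytilde_ytilde. apply psi_actl.
Qed.

Definition psi_hat z : Xhat a := exist _ (fun x => psi (ytilde x) z) (psi_presheaf z).

Lemma phi_le_hat_psi z x : phi z (ytilde x) <<= hat (psi_hat z) (yo x).
Proof.
  apply hat_intro. intro y. simpl.
  rewrite qtenC, <- tildehom_ytilde_ytilde. apply adj_counit.
Qed.

Lemma psi_hat_tight z : tight (psi_hat z).
Proof.
  apply cover_tight.
  apply qle_trans with (1 := adj_unit_cover z). apply isup_least. intro x.
  apply qle_trans with (hat (psi_hat z) (yo x) ** psi (ytilde x) z).
  - apply qten_mono; [apply phi_le_hat_psi | apply qle_refl].
  - exact (isup_ub (fun x => hat (psi_hat z) (yo x) ** pv (psi_hat z) x) x).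
Qed.

Definition adj_point z : Xtilde a := exist _ (psi_hat z) (psi_hat_tight z).

Lemma psi_adj_point q z : psi q z = th q (adj_point z).
Proof.
  destruct q as [q Hq]. apply qle_antisym.
  - apply hat_intro. intro x. simpl. rewrite qtenC.
    change (pv q x) with (pv (proj1_sig (exist _ q Hq : Xtilde a)) x).
    rewrite <- tildehom_ytilde. apply psi_actl.
  - unfold tildehom. simpl.
    apply qle_trans with (1 := cover_hat_le (psi_hat z) (tight_cover Hq)).
    apply isup_least. intro x. simpl.
    apply (psi_actl z (exist _ q Hq) (ytilde x)).
Qed.

Lemma phi_adj_point z q : phi z q = th (adj_point z) q.
Proof.
  destruct q as [q Hq]. apply qle_antisym.
  - apply hat_intro. intro x. simpl. rewrite qtenC.
    change (pv q x) with (pv (proj1_sig (exist _ q Hq : Xtilde a)) x).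
    rewrite <- tildehom_ytilde. apply adj_counit.
  - unfold tildehom at 1. simpl.
    apply qle_trans with (1 := @cover_hat_le (psi_hat z) q _ (adj_unit_cover z)).
    apply isup_least. intro x.
    change (pv q x) with (pv (proj1_sig (exist _ q Hq : Xtilde a)) x).
    rewrite <- (tildehom_ytilde (exist _ q Hq) x). apply phi_actr.
Qed.

Lemma adj_point_functor : Vfunctor c th adj_point.
Proof.
  intros z z'. rewrite <- psi_adj_point.
  rewrite <- (qten1 (c z z')).
  apply qle_trans with (psi (adj_point z) z ** c z z').
  - apply qten_mono; [rewrite psi_adj_point; apply hat_refl | apply qle_refl].
  - apply psi_actr.
Qed.

End Completeness.

Lemma Lcomplete_tildehom : Lcomplete th.
Proof.
  intros Z c Hc phi psi Hphi Hpsi Hadj.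
  exists (adj_point Hc Hphi Hpsi Hadj). split; [|split].
  - apply adj_point_functor.
  - intros z q. apply phi_adj_point.
  - intros q z. apply psi_adj_point.
Qed.

End Presheaves.

Theorem mainTheorem4 (V : quantale) (X : Type) (a : X -> X -> V) (HX : Vcat a) :
  (forall p : Xhat a,
      tight p <-> Lclosure (@hat V X a) (fun q => exists x, q = yoneda HX x) p) /\
  (exists yt : X -> Xtilde a,
      (forall x, proj1_sig (yt x) = yoneda HX x) /\
      Vfunctor a (@tildehom V X a) yt /\
      fully_faithful a (@tildehom V X a) yt /\
      Ldense (@tildehom V X a) yt /\
      Lcomplete (@tildehom V X a)).
Proof.
  split.
  - intro p. split; [apply tight_Lclosure | apply Lclosure_tight].
  - exists (ytilde HX). split; [|split; [|split; [|split]]].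
    + reflexivity.
    + intros x x'. rewrite tildehom_ytilde_ytilde. apply qle_refl.
    + intros x x'. symmetry. apply tildehom_ytilde_ytilde.
    + apply Ldense_ytilde.
    + exact (Lcomplete_tildehom HX).
Qed.
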